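(* Let $B_1,\dots,B_n$ be independent real-valued service times with finite means $\mu_i$, each with a distribution symmetric around its mean, and put $X_i=B_i-\mu_i$. Fix a sequence $\tau\in\mathsf S_n$ and use the mean-based schedule. Then for each $k\in\{1,\dots,n-1\}$, $W_{k+1}$ is stochastically dominated by $|S_k|$, where $S_k=X_{\tau(1)}+\cdots+X_{\tau(k)}$; consequently $\mathbb EW_{k+1}\le\mathbb E|X_{\tau(1)}+X_{\tau(2)}+\cdots+X_{\tau(k)}|$.
   Context: Under sequence $\tau$ ($\tau(i)$ the patient in slot $i$) and the mean-based schedule (interarrival time after patient $j$ equal to $\mu_j$), the waiting times are $W_1=0$, $W_{i+1}=(W_i+X_{\tau(i)})^+$ with $a^+=\max\{0,a\}$. *)

From HB Require Import structures.
From mathcomp Require Import all_boot all_order all_algebra all_fingroup.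
From mathcomp Require Import all_classical all_reals all_analysis.
Set Implicit Arguments. Unset Strict Implicit. Unset Printing Implicit Defensive.
Import Order.TTheory GRing.Theory Num.Theory.
Local Open Scope classical_set_scope.
Local Open Scope ring_scope.

Definition mutually_independent d (T : measurableType d) (R : realType)
  (P : probability T R) (n : nat) (B : 'I_n -> T -> R) : Prop :=
  forall (J : {set 'I_n}) (A : 'I_n -> set R),
    (forall i, measurable (A i)) ->
    P (\bigcap_(i in [set j | j \in J]) (B i @^-1` A i)) =
    (\prod_(i in J) P (B i @^-1` A i))%E.

Definition mean d (T : measurableType d) (R : realType) (P : probability T R)
  (Y : T -> R) : R := fine ('E_P[Y])%E.

Definition symmetric_around d (T : measurableType d) (R : realType)
  (P : probability T R) (Y : T -> R) (m : R) : Prop :=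
  forall A : set R, measurable A ->
    P [set w | A (Y w - m)] = P [set w | A (m - Y w)].

(* Lindley recursion, 0-based: lindley x 0 = W_1 = 0,
   lindley x i.+1 = (lindley x i + x i)^+ ; so lindley x k = W_{k+1}
   when x i = X_{tau(i+1)} (paper's 1-based indexing). *)
Fixpoint lindley (R : realType) (x : nat -> R) (i : nat) : R :=
  match i with
  | 0 => 0
  | i'.+1 => Num.max 0 (lindley x i' + x i')
  end.

Definition ord_seq (R : realType) (n : nat) (f : 'I_n -> R) (i : nat) : R :=
  oapp f 0 (insub i).

From HB Require Import structures.
From mathcomp Require Import all_boot all_order all_algebra all_fingroup.
From mathcomp Require Import all_classical all_reals all_analysis.
From mathcomp Require Import measurable_realfun lra.
Import Order.TTheory GRing.Theory Num.Theory.
Local Open Scope classical_set_scope.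
Local Open Scope ring_scope.
Set Implicit Arguments. Unset Strict Implicit. Unset Printing Implicit Defensive.

(* For [t >= 0], unfolding the Lindley recursion shows that [W_{k+1} > t] iff
   some tail sum [X_{tau(j+1)} + ... + X_{tau(k)}] exceeds [t], so the claim
   is Levy's maximal inequality for reversed partial sums:
   [P(max_j tail_j > t) <= 2 P(S_k > t) = P(|S_k| > t)].  Split the event
   according to the last [j] whose tail sum exceeds [t].  That event is
   determined by [B_{tau(j+1)}, ..., B_{tau(k)}], hence independent of the
   prefix [S_j], which is symmetric and so nonnegative with probability at
   least 1/2, and on the intersection [S_k = S_j + tail_j > t].  Independence of disjoint blocks of
   the [B_i] follows from mutual independence by a pi-lambda argument, and
   the symmetry of [S_j] from that of the summands through the uniqueness of
   a law determined on rectangles.  The bound on expectations is the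
   tail-integral formula for nonnegative variables. *)

Section real_probability.
Context d (T : measurableType d) (R : realType) (P : probability T R).

Definition pr (A : set T) : R := fine (P A).

Lemma prE A : measurable A -> P A = (pr A)%:E.
Proof.
move=> mA; rewrite /pr fineK // ge0_fin_numE ?measure_ge0 //.
exact: le_lt_trans (probability_le1 P mA) (ltey _).
Qed.

Lemma pr_ge0 A : measurable A -> 0 <= pr A.
Proof. by move=> mA; rewrite -lee_fin -prE // measure_ge0. Qed.

Lemma pr_setT : pr setT = 1.
Proof. by rewrite /pr probability_setT. Qed.

Lemma le_pr A C : measurable A -> measurable C -> A `<=` C -> pr A <= pr C.
Proof. by move=> mA mC AC; rewrite -lee_fin -!prE // le_measure ?inE. Qed.

Lemma prU A C : measurable A -> measurable C -> A `&` C = set0 ->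
  pr (A `|` C) = pr A + pr C.
Proof.
move=> mA mC AC0; apply: EFin_inj.
by rewrite EFinD -!prE ?measureU //; exact: measurableU.
Qed.

Lemma prU2 A C : measurable A -> measurable C -> pr (A `|` C) <= pr A + pr C.
Proof.
move=> mA mC; rewrite -lee_fin EFinD -!prE ?measureU2 //; exact: measurableU.
Qed.

Lemma prI_indep A C : measurable A -> measurable C ->
  P (A `&` C) = (P A * P C)%E -> pr (A `&` C) = pr A * pr C.
Proof. by move=> mA mC; rewrite /pr => ->; rewrite (prE mA) (prE mC). Qed.

Lemma measurable_lt_level d' (T' : measurableType d') (f : T' -> R) t :
  measurable_fun setT f -> measurable [set w | t < f w].
Proof.
by move=> mf; rewrite -preimage_itvoy -[X in measurable X]setTI; exact: mf.
Qed.

Lemma measurable_le_level d' (T' : measurableType d') (f : T' -> R) t :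
  measurable_fun setT f -> measurable [set w | t <= f w].
Proof.
by move=> mf; rewrite -preimage_itvcy -[X in measurable X]setTI; exact: mf.
Qed.

End real_probability.

Section independent_families.
Context d (T : measurableType d) (R : realType) (P : probability T R).

Definition indep_families (G1 G2 : set (set T)) :=
  forall E F, G1 E -> G2 F -> P (E `&` F) = (P E * P F)%E.

Lemma indep_familiesC G1 G2 : indep_families G1 G2 -> indep_families G2 G1.
Proof. by move=> ind F E G2F G1E; rewrite setIC muleC ind. Qed.

Lemma g_sigma_measurable (G : set (set T)) :
  G `<=` measurable -> <<s G>> `<=` measurable.
Proof. exact: smallest_sub (@sigma_algebra_measurable _ T). Qed.

(* Dynkin: for fixed [F], [E |-> P (E `&` F)] and [E |-> P F * P E] are finite
   measures agreeing on the pi-system [G1]. *)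
Lemma indep_families_g_sigmal G1 G2 :
  G1 `<=` measurable -> setI_closed G1 -> G1 setT -> G2 `<=` measurable ->
  indep_families G1 G2 -> indep_families <<s G1>> G2.
Proof.
move=> G1m G1I G1T G2m ind E F sE G2F.
have mF := G2m _ G2F.
pose r : {nonneg R} := NngNum (pr_ge0 P mF).
have cover : \bigcup_(k : nat) (setT : set T) = setT.
  by apply/seteqP; split => // w _; exists 0%N.
have : mrestr P mF E = mscale r P E.
  apply: (g_sigma_algebra_measure_unique G1 G1m (fun=> setT)) => //.
  - by move=> A G1A /=; rewrite /mrestr /mscale /= ind // muleC -prE.
  - by move=> _; change (P (setT `&` F) < +oo)%E; rewrite setTI prE ?ltry.
by rewrite /mrestr /mscale /= -prE // muleC.
Qed.

Lemma indep_families_g_sigma G1 G2 :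
  G1 `<=` measurable -> setI_closed G1 -> G1 setT ->
  G2 `<=` measurable -> setI_closed G2 -> G2 setT ->
  indep_families G1 G2 -> indep_families <<s G1>> <<s G2>>.
Proof.
move=> G1m G1I G1T G2m G2I G2T ind; apply: indep_familiesC.
apply: indep_families_g_sigmal => //; first exact: g_sigma_measurable.
exact/indep_familiesC/indep_families_g_sigmal.
Qed.

End independent_families.

Section cylinders.
Context d (T : measurableType d) (R : realType) (P : probability T R) (n : nat)
  (B : 'I_n -> {RV P >-> R}).

Definition cylinder (J : {set 'I_n}) : set (set T) :=
  [set E | exists2 A : 'I_n -> set R, (forall i, measurable (A i)) &
     E = [set w | forall i, i \in J -> A i (B i w)]].

Local Notation sigma_type J := (g_sigma_algebraType (cylinder J)).

Lemma cylinderE (J : {set 'I_n}) (A : 'I_n -> set R) :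
  [set w | forall i, i \in J -> A i (B i w)] =
  \bigcap_(i in [set j | j \in J]) (B i @^-1` A i).
Proof. by apply/seteqP; split => w /= H i Ji; apply: H. Qed.

Lemma cylinder_measurable J : cylinder J `<=` measurable.
Proof.
move=> _ [A mA ->]; rewrite cylinderE; apply: fin_bigcap_measurable.
  exact: finite_finset.
by move=> i _; exact: measurable_funPTI.
Qed.

Lemma cylinder_setI_closed J : setI_closed (cylinder J).
Proof.
move=> _ _ [A mA ->] [C mC ->]; exists (fun i => A i `&` C i).
  by move=> i; exact: measurableI.
apply/seteqP; split => w /=.
  by move=> [AB CB] i Ji; split; [exact: AB|exact: CB].
by move=> ACB; split => i /ACB[].
Qed.

Lemma cylinder_setT J : cylinder J setT.
Proof. by exists (fun=> setT) => //; apply/seteqP; split. Qed.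

Lemma g_sigma_cylinder_measurable J : <<s cylinder J>> `<=` measurable.
Proof. exact/g_sigma_measurable/cylinder_measurable. Qed.

Lemma measurable_fun_cylinder J (f : T -> R) :
  measurable_fun [set: sigma_type J] f -> measurable_fun [set: T] f.
Proof. by move=> mf _ Y mY; apply: g_sigma_cylinder_measurable; exact: mf. Qed.

Lemma measurable_fun_cylinder_B (J : {set 'I_n}) i : i \in J ->
  measurable_fun [set: sigma_type J] (B i : T -> R).
Proof.
move=> iJ _ Y mY; apply: sub_sigma_algebra.
exists (fun j => if j == i then Y else setT); first by move=> j; case: ifP.
apply/seteqP; split => w /=; first by move=> [_ Yw] j _; case: eqP => // ->.
by move=> /(_ i iJ); rewrite eqxx.
Qed.

Hypothesis indep : mutually_independent P (fun i => B i).

Lemma indep_cylinder (J1 J2 : {set 'I_n}) : [disjoint J1 & J2]%B ->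
  indep_families P (cylinder J1) (cylinder J2).
Proof.
move=> dJ _ _ [A mA ->] [C mC ->].
have notJ2 i : i \in J1 -> i \notin J2.
  by move=> iJ1; rewrite (disjointFr dJ iJ1).
pose D i := if i \in J1 then A i else C i.
have mD i : measurable (D i) by rewrite /D; case: ifP.
have -> : [set w | forall i, i \in J1 -> A i (B i w)] `&`
          [set w | forall i, i \in J2 -> C i (B i w)] =
          [set w | forall i, i \in J1 :|: J2 -> D i (B i w)].
  apply/seteqP; split => w /=.
    move=> [AB CB] i; rewrite finset.in_setU /D; case: ifP => [iJ1 _|_ /= iJ2].
      exact: AB.
    exact: CB.
  move=> DB; split => i iJ.
    by have := DB i; rewrite finset.in_setU iJ /D iJ; apply.
  have := DB i; rewrite finset.in_setU iJ orbT /D.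
  by case: ifP => [/notJ2|_]; [rewrite iJ|apply].
rewrite !cylinderE !indep // (eq_bigl [predU J1 & J2]) => [|i]; last first.
  by rewrite finset.in_setU.
rewrite bigU //=; congr (_ * _)%E; apply: eq_bigr => i iJ.
  by rewrite /D iJ.
by rewrite /D; case: ifP => // /notJ2; rewrite iJ.
Qed.

Lemma indep_g_sigma_cylinder (J1 J2 : {set 'I_n}) : [disjoint J1 & J2]%B ->
  indep_families P <<s cylinder J1>> <<s cylinder J2>>.
Proof.
move=> dJ; apply: indep_families_g_sigma (indep_cylinder dJ);
  by [exact: cylinder_measurable|exact: cylinder_setI_closed
      |exact: cylinder_setT].
Qed.

End cylinders.

Section symmetric_law.
Context d (T : measurableType d) (R : realType) (P : probability T R).

Definition symmetric_law (f : T -> R) := forall A : set R, measurable A ->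
  P (f @^-1` A) = P ((fun w => - f w) @^-1` A).

Lemma symmetric_law0 : symmetric_law (fun=> 0).
Proof. by move=> A _; under [X in _ = P X]eq_set do rewrite oppr0. Qed.

Lemma symmetric_law_around (f : T -> R) m :
  symmetric_around P f m -> symmetric_law (fun w => f w - m).
Proof.
by move=> sf A mA; under [X in _ = P X]eq_set do rewrite opprB; exact: sf.
Qed.

(* The laws of [(U, V)] and [(-U, -V)] on [R * R] agree on measurable
   rectangles, hence everywhere; [U + V] and [-(U + V)] are their images
   under addition. *)
Lemma symmetric_lawD (U V : T -> R) :
  measurable_fun setT U -> measurable_fun setT V ->
  (forall A C, measurable A -> measurable C ->
     P (U @^-1` A `&` V @^-1` C) = (P (U @^-1` A) * P (V @^-1` C))%E) ->
  symmetric_law U -> symmetric_law V -> symmetric_law (fun w => U w + V w).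
Proof.
move=> mU mV ind sU sV.
have mN (A : set R) : measurable A -> measurable ((fun x : R => - x) @^-1` A).
  by move=> mA; rewrite -[X in measurable X]setTI; exact: measurable_funN.
have mUV : measurable_fun setT (fun w => (U w, V w)).
  exact: measurable_fun_pair.
have mNUV : measurable_fun setT (fun w => (- U w, - V w)).
  by apply: measurable_fun_pair; exact: measurable_funN.
have lawE S : measurable S -> pushforward P (fun w => (U w, V w)) S =
                              pushforward P (fun w => (- U w, - V w)) S.
  move=> mS; apply: (measure_unique
    [set A `*` C | A in measurable & C in measurable] (fun=> setT)) => //.
  - exact: measurable_prod_measurableType.
  - move=> _ _ [A mA [C mC <-]] [A' mA' [C' mC' <-]]; rewrite -setXI.
    exists (A `&` A'); first exact: measurableI.
    by exists (C `&` C') => //; exact: measurableI.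
  - by move=> _; exists setT => //; exists setT => //; rewrite setXTT.
  - by apply/seteqP; split => // w _; exists 0%N.
  - move=> _ [A mA [C mC <-]].
    change (P (U @^-1` A `&` V @^-1` C) =
            P ((fun w => - U w) @^-1` A `&` (fun w => - V w) @^-1` C)).
    rewrite ind // (sU A mA) (sV C mC).
    change ((P ((fun w => (- U w)%R) @^-1` A) *
             P ((fun w => (- V w)%R) @^-1` C))%E =
      P (U @^-1` ((fun x : R => - x) @^-1` A) `&`
         V @^-1` ((fun x : R => - x) @^-1` C))).
    by rewrite ind; try exact: mN.
  - by move=> _; change (P setT < +oo)%E; rewrite probability_setT ltry.
move=> A mA.
have madd : measurable_fun setT (fun p : R * R => p.1 + p.2).
  by apply: measurable_funD; [exact: measurable_fst|exact: measurable_snd].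
have mS : measurable [set p : R * R | A (p.1 + p.2)].
  by rewrite -[X in measurable X]setTI; exact: madd.
have := lawE _ mS.
change (P [set w | A (U w + V w)] = P [set w | A (- U w + - V w)] ->
  P [set w | A (U w + V w)] = P [set w | A (- (U w + V w))]).
by under [X in _ -> _ = P X]eq_set => w do rewrite opprD.
Qed.

Lemma symmetric_law_lt f t : symmetric_law f ->
  P [set w | t < f w] = P [set w | t < - f w].
Proof. by move=> sf; rewrite -!preimage_itvoy sf. Qed.

Lemma symmetric_law_half f : measurable_fun setT f -> symmetric_law f ->
  1 / 2 <= pr P [set w | 0 <= f w].
Proof.
move=> mf sf.
have mNf : measurable_fun setT (fun w => - f w) by exact: measurable_funN.
have mpos := measurable_le_level 0 mf; have mneg := measurable_le_level 0 mNf.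
have eq_neg : pr P [set w | 0 <= - f w] = pr P [set w | 0 <= f w].
  by rewrite /pr -!preimage_itvcy sf.
have : pr P setT <= pr P ([set w | 0 <= f w] `|` [set w | 0 <= - f w]).
  apply: le_pr => //; first exact: measurableU.
  by move=> w _ /=; rewrite oppr_ge0; exact/orP/le_total.
have := prU2 P mpos mneg; rewrite pr_setT eq_neg; lra.
Qed.

End symmetric_law.

Section ordered_sums.
Context d (T : measurableType d) (R : realType) (P : probability T R) (n : nat)
  (B : 'I_n -> {RV P >-> R}) (tau : 'S_n) (c : 'I_n -> R).

(* With [c i] the mean of [B i], [xs i] is [X_{tau(i+1)}] for
   [i < n] (and [0] beyond), [seg_sum a b] is [X_{tau(a+1)} + ... + X_{tau(b)}]
   and [block a b] is the set of indices of the [B] entering it. *)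
Definition xs (i : nat) (w : T) : R :=
  ord_seq (fun j => B (tau j) w - c (tau j)) i.

Definition seg_sum (a b : nat) (w : T) : R := \sum_(a <= i < b) xs i w.

Definition block (a b : nat) : {set 'I_n} :=
  finset (fun m => a <= (tau^-1)%g m < b)%N.

Local Notation sigma_type J := (g_sigma_algebraType (cylinder B J)).

Lemma block_disjoint a b e : [disjoint block a b & block b e]%B.
Proof.
apply/pred0P => m /=; rewrite !inE.
case/boolP: (a <= (tau^-1)%g m < b)%N => //= /andP[_].
by rewrite ltnNge => /negPf ->.
Qed.

Lemma measurable_xs_block a b i : (a <= i < b)%N ->
  measurable_fun [set: sigma_type (block a b)] (xs i).
Proof.
move=> abi; rewrite /xs /ord_seq; case: insubP => [j _ ji|_] /=; last first.
  exact: measurable_cst.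
apply: measurable_funB; last exact: measurable_cst.
by apply: measurable_fun_cylinder_B; rewrite inE permK ji.
Qed.

Lemma measurable_seg_sum_block a b j1 j2 : (a <= j1)%N -> (j2 <= b)%N ->
  measurable_fun [set: sigma_type (block a b)] (seg_sum j1 j2).
Proof.
move=> aj1 j2b.
rewrite (_ : seg_sum j1 j2 = fun w => \sum_(i <- index_iota j1 j2)
    (fun i => if (j1 <= i < j2)%N then xs i else fun=> 0) i w).
  apply: measurable_sum => i /=; case: ifP => [/andP[j1i ij2]|_]; last first.
    exact: measurable_cst.
  apply: measurable_xs_block.
  by rewrite (leq_trans aj1 j1i) (leq_trans ij2 j2b).
by apply/funext => w; apply: eq_big_nat => i ->.
Qed.

Lemma measurable_seg_sum a b : measurable_fun setT (seg_sum a b).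
Proof.
exact: measurable_fun_cylinder (measurable_seg_sum_block (leqnn a) (leqnn b)).
Qed.

Lemma measurable_xs i : measurable_fun setT (xs i).
Proof.
apply: (measurable_fun_cylinder (B := B) (J := block i i.+1)).
by apply: (@measurable_xs_block i i.+1); apply/andP.
Qed.

Lemma seg_sum_cat a j b w : (a <= j <= b)%N ->
  seg_sum a b w = seg_sum a j w + seg_sum j b w.
Proof. by move=> /andP[aj jb]; rewrite /seg_sum -big_cat_nat. Qed.

Lemma seg_sum0E k w : (k <= n)%N ->
  seg_sum 0 k w = \sum_(j < n | (j < k)%N) (B (tau j) w - c (tau j)).
Proof.
move=> kn; rewrite /seg_sum (big_nat_widen 0 k n) // big_mkord.
by apply: eq_bigr => j _; rewrite /xs /ord_seq valK.
Qed.

Hypothesis indep : mutually_independent P (fun i => B i).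
Hypothesis symB : forall i, symmetric_around P (B i) (c i).

Lemma indep_blocks a b e : indep_families P
  <<s cylinder B (block a b)>> <<s cylinder B (block b e)>>.
Proof. exact/indep_g_sigma_cylinder/block_disjoint. Qed.

Lemma symmetric_law_xs i : symmetric_law P (xs i).
Proof.
rewrite /xs /ord_seq; case: insubP => [j _ _|_] /=; last exact: symmetric_law0.
exact: symmetric_law_around.
Qed.

Lemma symmetric_law_prefix j : symmetric_law P (seg_sum 0 j).
Proof.
elim: j => [|j IHj].
  by rewrite /seg_sum; under eq_fun do rewrite big_geq //; exact: symmetric_law0.
have -> : seg_sum 0 j.+1 = fun w => seg_sum 0 j w + xs j w.
  by apply/funext => w; rewrite /seg_sum big_nat_recr.
apply: symmetric_lawD => //; first exact: measurable_seg_sum.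
- exact: measurable_xs.
- move=> A C mA mC; apply: (@indep_blocks 0 j j.+1).
    by rewrite -[X in <<s _ >> X]setTI; exact: measurable_seg_sum_block.
  have jj1 : (j <= j < j.+1)%N by rewrite leqnn ltnSn.
  by rewrite -[X in <<s _ >> X]setTI; apply: (measurable_xs_block jj1).
- exact: symmetric_law_xs.
Qed.

End ordered_sums.

Section lindley.
Context (R : realType).

Lemma lindley_ge0 (x : nat -> R) k : 0 <= lindley x k.
Proof. by case: k => [|k] //=; rewrite le_max lexx. Qed.

Lemma lindley_gtP (x : nat -> R) k t : t < lindley x k <->
  t < 0 \/ exists2 j, (j < k)%N & t < \sum_(j <= i < k) x i.
Proof.
elim: k t => [|k IHk] t /=; first by split; [left|case=> // -[]].
rewrite lt_max -ltrBlDr; split.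
  case/orP => [t0|/IHk[tx|[j jk tx]]]; first by left.
    by right; exists k => //; rewrite big_nat1; lra.
  right; exists j; first exact: ltnW.
  by rewrite big_nat_recr ?(ltnW jk) //=; lra.
case=> [->//|[j]]; rewrite ltnS leq_eqVlt => /orP[/eqP->|jk].
  by rewrite big_nat1 => tx; apply/orP; right; apply/IHk; left; lra.
rewrite big_nat_recr ?(ltnW jk) //= => tx.
by apply/orP; right; apply/IHk; right; exists j => //; lra.
Qed.

Lemma measurable_lindley d (T : measurableType d) (x : nat -> T -> R) k :
  (forall i, measurable_fun setT (x i)) ->
  measurable_fun setT (fun w => lindley (x ^~ w) k).
Proof.
move=> mx; elim: k => [|k IHk] /=; first exact: measurable_cst.
by apply: measurable_maxr; [exact: measurable_cst|exact: measurable_funD].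
Qed.

End lindley.

Section levy_inequality.
Context d (T : measurableType d) (R : realType) (P : probability T R) (n : nat)
  (B : 'I_n -> {RV P >-> R}) (tau : 'S_n) (c : 'I_n -> R).
Hypothesis indep : mutually_independent P (fun i => B i).
Hypothesis symB : forall i, symmetric_around P (B i) (c i).
Variables (k : nat) (t : R).

Local Notation xs := (xs B tau c).
Local Notation seg_sum := (seg_sum B tau c).
Local Notation block := (block tau).
Local Notation sigma_type J := (g_sigma_algebraType (cylinder B J)).

Definition tail_exceeds (j : nat) : set T :=
  \bigcup_(i in [set i | j <= i < k]%N) [set w | t < seg_sum i k w].

Definition last_exceedance (j : nat) : set T :=
  [set w | t < seg_sum j k w] `\` tail_exceeds j.+1.

Definition sum_exceeds : set T := [set w | t < seg_sum 0 k w].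

Lemma tail_exceeds_ge j : (k <= j)%N -> tail_exceeds j = set0.
Proof.
move=> kj; apply/seteqP; split => // w [i /andP[ji ik] _].
by move: (leq_trans kj ji); rewrite leqNgt ik.
Qed.

Lemma tail_exceedsS j : (j < k)%N ->
  tail_exceeds j = last_exceedance j `|` tail_exceeds j.+1.
Proof.
move=> jk; apply/seteqP; split => w /=.
  move=> [i /andP[ji ik] ti].
  have [|nF] := pselect (tail_exceeds j.+1 w); first by right.
  left; split => //; have [-> //|ji'] := eqVneq j i.
  by case: nF; exists i => //=; rewrite ltn_neqAle ji' ji ik.
case=> [[tj _]|[i /andP[ji ik] ti]]; first by exists j => //=; rewrite leqnn.
by exists i => //=; rewrite (ltnW ji).
Qed.

Lemma tail_exceeds_block a j : (a <= j)%N ->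
  <<s cylinder B (block a k)>> (tail_exceeds j).
Proof.
move=> aj.
apply: (@bigcup_measurable _ (sigma_type (block a k))) => i /andP[ji _].
apply: measurable_lt_level.
exact: measurable_seg_sum_block (leq_trans aj ji) (leqnn k).
Qed.

Lemma measurable_tail_exceeds j : measurable (tail_exceeds j).
Proof. exact: g_sigma_cylinder_measurable (tail_exceeds_block (leq0n j)). Qed.

Lemma measurable_sum_exceeds : measurable sum_exceeds.
Proof. exact: measurable_lt_level (measurable_seg_sum B tau c 0 k). Qed.

Lemma last_exceedance_block j :
  <<s cylinder B (block j k)>> (last_exceedance j).
Proof.
apply: (@measurableD _ (sigma_type (block j k)));
  last exact: tail_exceeds_block.
apply: measurable_lt_level; exact: measurable_seg_sum_block (leqnn j) (leqnn k).
Qed.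

Lemma pr_last_exceedance j : (j < k)%N ->
  pr P (last_exceedance j) <= 2 * pr P (last_exceedance j `&` sum_exceeds).
Proof.
move=> jk; set E := last_exceedance j; set Dp := [set w | 0 <= seg_sum 0 j w].
have sE : <<s cylinder B (block j k)>> E by exact: last_exceedance_block.
have sDp : <<s cylinder B (block 0 j)>> Dp.
  apply: (@measurable_le_level _ _ (sigma_type (block 0 j))).
  exact: measurable_seg_sum_block (leqnn 0) (leqnn j).
have mE := g_sigma_cylinder_measurable sE.
have mDp := g_sigma_cylinder_measurable sDp.
have indepDpE : pr P (Dp `&` E) = pr P Dp * pr P E.
  exact: prI_indep mDp mE (indep_blocks indep sDp sE).
have DpE_sub : pr P (Dp `&` E) <= pr P (E `&` sum_exceeds).
  apply: le_pr; first exact: measurableI _ _ mDp mE.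
    exact: measurableI _ _ mE measurable_sum_exceeds.
  move=> w [Dpw Ew]; split => //; have [/= tw _] := Ew.
  have {}Dpw : 0 <= seg_sum 0 j w := Dpw.
  have jk0 : (0 <= j <= k)%N by rewrite (ltnW jk).
  by rewrite /sum_exceeds /= (seg_sum_cat B tau c w jk0); lra.
have := symmetric_law_half (measurable_seg_sum B tau c 0 j)
  (symmetric_law_prefix tau indep symB j).
by have := pr_ge0 P mE; rewrite -/Dp; nra.
Qed.

Lemma levy_tail_exceeds m :
  pr P (tail_exceeds (k - m)) <=
  2 * pr P (tail_exceeds (k - m) `&` sum_exceeds).
Proof.
elim: m => [|m IHm].
  by rewrite subn0 tail_exceeds_ge // set0I /pr measure0 mulr0.
have [km|mk] := leqP k m.
  have /eqP km0 : (k - m == 0)%N by rewrite subn_eq0.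
  by move: IHm; rewrite subnS km0.
pose j := (k - m.+1)%N.
have jS : j.+1 = (k - m)%N by rewrite subnSK.
have jk : (j < k)%N by rewrite jS leq_subr.
have mE := g_sigma_cylinder_measurable (last_exceedance_block (j := j)).
have mF := measurable_tail_exceeds j.+1; have mS := measurable_sum_exceeds.
have disj : last_exceedance j `&` tail_exceeds j.+1 = set0 by rewrite setDKI.
rewrite -/j tail_exceedsS // setIUl !prU //; first last.
- by rewrite setIACA disj set0I.
- exact: measurableI _ _ mF mS.
- exact: measurableI _ _ mE mS.
have := pr_last_exceedance jk; rewrite -jS in IHm; lra.
Qed.

Lemma lindley_tail_le :
  (P [set w | t < lindley (xs ^~ w) k]%R <=
   P [set w | t < `|seg_sum 0 k w|]%R)%E.
Proof.
have mW : measurable [set w | t < lindley (xs ^~ w) k].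
  exact: measurable_lt_level (measurable_lindley k (measurable_xs B tau c)).
have [tn|t0] := ltP t 0.
  rewrite (_ : [set w | t < `|_|] = setT) ?probability_setT ?probability_le1 //.
  by apply/seteqP; split => // w _ /=; exact: lt_le_trans tn _.
have -> : [set w | t < lindley (xs ^~ w) k] = tail_exceeds 0.
  apply/seteqP; split => w /=.
    by move/lindley_gtP => [|[j jk tj]]; [lra|exists j].
  by move=> [j /andP[_ jk] tj]; apply/lindley_gtP; right; exists j.
have mS := measurable_sum_exceeds.
have mN : measurable [set w | t < - seg_sum 0 k w].
  apply: measurable_lt_level; apply: measurable_funN.
  exact: measurable_seg_sum.
have -> : [set w | t < `|seg_sum 0 k w|] =
    sum_exceeds `|` [set w | t < - seg_sum 0 k w].
  by apply/seteqP; split => w /=; rewrite ltr_normr => /orP.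
have disj : sum_exceeds `&` [set w | t < - seg_sum 0 k w] = set0.
  by apply/seteqP; split => // w []; rewrite /sum_exceeds /=; lra.
have sym_sum : pr P [set w | t < - seg_sum 0 k w] = pr P sum_exceeds.
  by rewrite /pr -symmetric_law_lt //; exact: symmetric_law_prefix.
have mF := measurable_tail_exceeds 0; have mSN := measurableU _ _ mS mN.
rewrite !prE // lee_fin prU // sym_sum.
have := levy_tail_exceeds k; rewrite subnn.
have := le_pr P (measurableI _ _ mF mS) mS (@subIsetr _ _ _); lra.
Qed.

End levy_inequality.

Lemma ge0_le_expectation_ccdf d (T : measurableType d) (R : realType)
    (P : probability T R) (X Y : T -> R) :
  measurable_fun setT X -> measurable_fun setT Y ->
  (forall w, 0 <= X w) -> (forall w, 0 <= Y w) ->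
  (forall t, P [set w | t < X w]%R <= P [set w | t < Y w]%R)%E ->
  ('E_P[X] <= 'E_P[Y])%E.
Proof.
move=> mX mY X0 Y0 XY.
pose X' : {RV P >-> R} :=
  MeasurableFun.Pack (MeasurableFun.Class (isMeasurableFun.Build _ _ _ _ X mX)).
pose Y' : {RV P >-> R} :=
  MeasurableFun.Pack (MeasurableFun.Class (isMeasurableFun.Build _ _ _ _ Y mY)).
rewrite -[X]/(X' : T -> R) -[Y]/(Y' : T -> R).
rewrite (ge0_expectation_ccdf (X := X') X0) (ge0_expectation_ccdf (X := Y') Y0).
apply: ge0_le_integral => //; try exact: measurable_funTS (ccdf_measurable _).
by move=> r _; rewrite /ccdf /distribution /pushforward !preimage_itvoy; exact: XY.
Qed.

Theorem lemma3p2 (d : measure_display) (T : measurableType d) (R : realType)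
  (P : probability T R) (n : nat) (B : 'I_n -> {RV P >-> R})
  (tau : 'S_n) :
  mutually_independent P (fun i => B i) ->
  (forall i, P.-integrable setT (EFin \o B i)) ->
  (forall i, symmetric_around P (B i) (mean P (B i))) ->
  let X := fun (i : 'I_n) (w : T) => B i w - mean P (B i) in
  let W := fun (k : nat) (w : T) => lindley (ord_seq (fun j => X (tau j) w)) k in
  let S := fun (k : nat) (w : T) => \sum_(j < n | (j < k)%N) X (tau j) w in
  forall k : nat, (1 <= k <= n - 1)%N ->
    (forall t : R, P [set w | (t < W k w)%R] <= P [set w | (t < `|S k w|)%R])%E /\
    ('E_P[W k] <= 'E_P[fun w => `|S k w|%R])%E.
Proof.
move=> indep _ symB X W S k /andP[_ kn1].
pose c i := mean P (B i).
have kn : (k <= n)%N := leq_trans kn1 (leq_subr 1 n).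
have SE : S k = seg_sum B tau c 0 k.
  by apply/funext => w; rewrite (seg_sum0E B tau c w kn).
have tail t : (P [set w | t < W k w]%R <= P [set w | t < `|S k w|]%R)%E.
  by rewrite SE; exact: lindley_tail_le.
split => //; apply: ge0_le_expectation_ccdf => [| |w|w|//].
- exact: measurable_lindley (measurable_xs B tau c).
- by rewrite SE; apply: measurableT_comp => //; exact: measurable_seg_sum.
- exact: lindley_ge0.
- exact: normr_ge0.
Qed.
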